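(* Let $M>0$ and $q,Q,g\in\mathbb{R}$, let $\mathbf{n}\in\mathbb{R}^3$ be a constant vector, and on $\{(\mathbf{x},\boldsymbol{\Pi}):\mathbf{x}\in\mathbb{R}^3\setminus\{0\},\ \boldsymbol{\Pi}\in\mathbb{R}^3\}$ consider the bracket $$\{P,R\}=\sum_i\Big(\frac{\partial P}{\partial x^i}\frac{\partial R}{\partial \Pi_i}-\frac{\partial P}{\partial \Pi_i}\frac{\partial R}{\partial x^i}\Big)+q\sum_{i,j}F_{ij}\frac{\partial P}{\partial \Pi_i}\frac{\partial R}{\partial \Pi_j},\qquad F_{ij}=\epsilon_{ijk}B^k,$$ where $\mathbf{B}(\mathbf{x})=\dfrac{g}{r^{5/2}}\,\mathbf{x}$, $r=|\mathbf{x}|$. Let $$H=\frac{\boldsymbol{\Pi}^2}{2M}+\frac{qQ}{r},\qquad \mathbf{L}=\mathbf{x}\times\boldsymbol{\Pi},\qquad \mathbf{K}_2=\boldsymbol{\Pi}\times\mathbf{L}+MqQ\,\frac{\mathbf{x}}{r}.$$ Then the function $$K=\mathbf{n}\cdot\Big(\mathbf{K}_2+\frac{2gq}{r^{1/2}}\,\mathbf{L}-2g^2q^2\,\frac{\mathbf{x}}{r}\Big)$$ satisfies $\{K,H\}=0$ identically.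
   Context: $\epsilon_{ijk}$ is the Levi-Civita symbol and indices are raised and lowered with the Euclidean metric $\delta_{ij}$. The variables $\Pi_i$ are the gauge-covariant (kinetic) momenta and the bracket above is the gauge-covariant Poisson bracket, in which the $\Pi_i$ are not canonical ($\{\Pi_i,\Pi_j\}=qF_{ij}$). This models a charge $q$ of mass $M$ moving in the Coulomb potential of a charge $Q$ superposed with the spherically symmetric magnetic field $\mathbf{B}$. *)

From Stdlib Require Import Reals.
Open Scope R_scope.

(* Vectors of R^3 are functions nat -> R; only components 0,1,2 are used. *)
Definition vec3 := nat -> R.

Definition sum3 (f : nat -> R) : R := f 0%nat + f 1%nat + f 2%nat.

Definition eps (i j k : nat) : R :=
  match i, j, k with
  | O, S O, S (S O) | S O, S (S O), O | S (S O), O, S O => 1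
  | O, S (S O), S O | S (S O), S O, O | S O, O, S (S O) => -1
  | _, _, _ => 0
  end.

Definition dot (a b : vec3) : R := sum3 (fun i => a i * b i).

Definition cross (a b : vec3) : vec3 :=
  fun i => sum3 (fun j => sum3 (fun k => eps i j k * a j * b k)).

Definition norm3 (x : vec3) : R := sqrt (dot x x).

Definition Bfield (g : R) (x : vec3) : vec3 :=
  fun k => g / Rpower (norm3 x) (5/2) * x k.

Definition Fmat (g : R) (x : vec3) (i j : nat) : R :=
  sum3 (fun k => eps i j k * Bfield g x k).

Definition upd (v : vec3) (i : nat) (t : R) : vec3 :=
  fun j => if Nat.eqb j i then t else v j.

Definition phasefun := vec3 -> vec3 -> R.

Definition partial_x (f : phasefun) (x p : vec3) (i : nat) (d : R) : Prop :=
  derivable_pt_lim (fun t => f (upd x i t) p) (x i) d.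

Definition partial_p (f : phasefun) (x p : vec3) (i : nat) (d : R) : Prop :=
  derivable_pt_lim (fun t => f x (upd p i t)) (p i) d.

(* The gauge-covariant bracket {P,R} at (x,p), expressed through the partial
   derivatives dPx_i = dP/dx^i, dPp_i = dP/dPi_i, etc. *)
Definition bracket_val (q g : R) (x : vec3)
    (dPx dPp dRx dRp : nat -> R) : R :=
  sum3 (fun i => dPx i * dRp i - dPp i * dRx i)
  + q * sum3 (fun i => sum3 (fun j => Fmat g x i j * dPp i * dRp j)).

Definition Ham (M q Q : R) : phasefun :=
  fun x p => dot p p / (2 * M) + q * Q / norm3 x.

Definition Lvec (x p : vec3) : vec3 := cross x p.

Definition K2vec (M q Q : R) (x p : vec3) : vec3 :=
  fun i => cross p (Lvec x p) i + M * q * Q * (x i / norm3 x).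

Definition Kfun (M q Q g : R) (n : vec3) : phasefun :=
  fun x p =>
    dot n (fun i => K2vec M q Q x p i
                    + 2 * g * q / Rpower (norm3 x) (1/2) * Lvec x p i
                    - 2 * g ^ 2 * q ^ 2 * (x i / norm3 x)).

(** The partial derivatives of [H] and [K]
    are obtained in closed form; substituted into the bracket, every term
    cancels identically except for multiples of [r^2 - |x|^2]. *)

From Stdlib Require Import Reals Lra Lia.
Open Scope R_scope.

Lemma derivable_pt_lim_plus_fun f g x a b :
  derivable_pt_lim f x a -> derivable_pt_lim g x b ->
  derivable_pt_lim (fun t => f t + g t) x (a + b).
Proof. exact (derivable_pt_lim_plus f g x a b). Qed.

Lemma derivable_pt_lim_minus_fun f g x a b :
  derivable_pt_lim f x a -> derivable_pt_lim g x b ->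
  derivable_pt_lim (fun t => f t - g t) x (a - b).
Proof. exact (derivable_pt_lim_minus f g x a b). Qed.

Lemma derivable_pt_lim_mult_fun f g x a b :
  derivable_pt_lim f x a -> derivable_pt_lim g x b ->
  derivable_pt_lim (fun t => f t * g t) x (a * g x + f x * b).
Proof. exact (derivable_pt_lim_mult f g x a b). Qed.

Lemma derivable_pt_lim_div_fun f g x a b :
  derivable_pt_lim f x a -> derivable_pt_lim g x b -> g x <> 0 ->
  derivable_pt_lim (fun t => f t / g t) x ((a * g x - b * f x) / (g x)²).
Proof. exact (derivable_pt_lim_div f g x a b). Qed.

Lemma derivable_pt_lim_sqrt_comp f x a :
  derivable_pt_lim f x a -> 0 < f x ->
  derivable_pt_lim (fun t => sqrt (f t)) x (/ (2 * sqrt (f x)) * a).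
Proof.
  intros Hf Hpos. apply (derivable_pt_lim_comp f sqrt); [exact Hf |].
  now apply derivable_pt_lim_sqrt.
Qed.

Lemma derivable_pt_lim_Rpower_comp f x a c :
  derivable_pt_lim f x a -> 0 < f x ->
  derivable_pt_lim (fun t => Rpower (f t) c) x (c * Rpower (f x) (c - 1) * a).
Proof.
  intros Hf Hpos. apply (derivable_pt_lim_comp f (fun y => Rpower y c)); [exact Hf |].
  now apply derivable_pt_lim_power.
Qed.

Lemma derivable_pt_lim_eq f x d d' :
  derivable_pt_lim f x d -> d = d' -> derivable_pt_lim f x d'.
Proof. now intros Hf <-. Qed.

(* Side conditions of [sqrt], [/] and [Rpower] are left as goals. *)
Ltac derive :=
  match goal with
  | |- derivable_pt_lim (fun _ => ?c) _ _ => apply derivable_pt_lim_const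
  | |- derivable_pt_lim (fun t => t) _ _ => apply derivable_pt_lim_id
  | |- derivable_pt_lim (fun t => @?A t + @?B t) _ _ =>
      eapply (derivable_pt_lim_plus_fun A B); [derive | derive]
  | |- derivable_pt_lim (fun t => @?A t - @?B t) _ _ =>
      eapply (derivable_pt_lim_minus_fun A B); [derive | derive]
  | |- derivable_pt_lim (fun t => @?A t * @?B t) _ _ =>
      eapply (derivable_pt_lim_mult_fun A B); [derive | derive]
  | |- derivable_pt_lim (fun t => @?A t / @?B t) _ _ =>
      eapply (derivable_pt_lim_div_fun A B); [derive | derive |]
  | |- derivable_pt_lim (fun t => sqrt (@?A t)) _ _ =>
      eapply (derivable_pt_lim_sqrt_comp A); [derive |]
  | |- derivable_pt_lim (fun t => Rpower (@?A t) ?c) _ _ =>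
      eapply (derivable_pt_lim_Rpower_comp A); [derive |]
  end.

Lemma dot_self_pos (x : vec3) :
  (x 0%nat, x 1%nat, x 2%nat) <> (0, 0, 0) -> 0 < dot x x.
Proof.
  intros Hx. unfold dot, sum3.
  destruct (Req_dec (x 0%nat) 0) as [h0 | h0]; [| nra].
  destruct (Req_dec (x 1%nat) 0) as [h1 | h1]; [| nra].
  destruct (Req_dec (x 2%nat) 0) as [h2 | h2]; [| nra].
  now rewrite h0, h1, h2 in Hx.
Qed.

Lemma norm3_pos (x : vec3) :
  (x 0%nat, x 1%nat, x 2%nat) <> (0, 0, 0) -> 0 < norm3 x.
Proof. intros Hx. apply sqrt_lt_R0, dot_self_pos, Hx. Qed.

Lemma Rpower_half_sqr r : 0 < r -> Rpower r (1/2) * Rpower r (1/2) = r.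
Proof.
  intros Hr. rewrite <- Rpower_plus. replace (1/2 + 1/2) with 1 by field.
  now apply Rpower_1.
Qed.

Lemma Rpower_half_pred r : 0 < r -> Rpower r (1/2 - 1) = Rpower r (1/2) / r.
Proof.
  intros Hr. replace (1/2 - 1) with (1/2 + - (1)) by field.
  now rewrite Rpower_plus, Rpower_Ropp, Rpower_1.
Qed.

Lemma Rpower_five_halves r : 0 < r -> Rpower r (5/2) = r ^ 2 * Rpower r (1/2).
Proof.
  intros Hr. replace (5/2) with (INR 2 + 1/2) by (simpl; field).
  now rewrite Rpower_plus, Rpower_pow.
Qed.

Definition grad_x_Ham (q Q : R) (x : vec3) : vec3 :=
  fun i => - (q * Q * x i / norm3 x ^ 3).

Definition grad_p_Ham (M : R) (p : vec3) : vec3 := fun i => p i / M.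

Definition grad_x_Kfun (M q Q g : R) (n x p : vec3) : vec3 :=
  fun i => n i * dot p p - dot n p * p i
    + (M * q * Q - 2 * g ^ 2 * q ^ 2) * (n i / norm3 x - dot n x * x i / norm3 x ^ 3)
    + 2 * g * q * cross p n i / Rpower (norm3 x) (1/2)
    - g * q * dot n (cross x p) * x i / (norm3 x ^ 2 * Rpower (norm3 x) (1/2)).

Definition grad_p_Kfun (q g : R) (n x p : vec3) : vec3 :=
  fun i => 2 * dot n x * p i - n i * dot p x - dot n p * x i
    + 2 * g * q * cross n x i / Rpower (norm3 x) (1/2).

Section Gradients.

Variables (M q Q g : R) (n x p : vec3).
Hypothesis (HM : 0 < M) (Hx : (x 0%nat, x 1%nat, x 2%nat) <> (0, 0, 0)).

Ltac partial_tac :=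
  let Hxx := fresh in let Hr := fresh in
  pose proof (dot_self_pos x Hx) as Hxx; pose proof (norm3_pos x Hx) as Hr;
  lazymatch goal with |- (?k < 3)%nat -> _ => intros ?; destruct k as [|[|[|?]]]; [| | | lia] end;
  cbv beta iota delta [partial_x partial_p Kfun K2vec Lvec Ham cross dot sum3 norm3
    eps upd Nat.eqb grad_x_Kfun grad_p_Kfun grad_x_Ham grad_p_Ham] in *;
  (eapply derivable_pt_lim_eq;
   [ derive;
     first [ exact Hxx | apply sqrt_lt_R0, Hxx | apply Rgt_not_eq, sqrt_lt_R0, Hxx
           | apply Rgt_not_eq, exp_pos | lra ]
   | cbv beta; rewrite ?Rpower_half_pred by exact Hr;
     assert (Rpower (sqrt (dot x x)) (1/2) <> 0) by apply Rgt_not_eq, exp_pos;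
     unfold Rsqr, dot, sum3 in *; field; lra ]).

Lemma partial_x_Kfun i : (i < 3)%nat ->
  partial_x (Kfun M q Q g n) x p i (grad_x_Kfun M q Q g n x p i).
Proof. partial_tac. Qed.

Lemma partial_p_Kfun i : (i < 3)%nat ->
  partial_p (Kfun M q Q g n) x p i (grad_p_Kfun q g n x p i).
Proof. partial_tac. Qed.

Lemma partial_x_Ham i : (i < 3)%nat ->
  partial_x (Ham M q Q) x p i (grad_x_Ham q Q x i).
Proof. partial_tac. Qed.

Lemma partial_p_Ham i : (i < 3)%nat ->
  partial_p (Ham M q Q) x p i (grad_p_Ham M p i).
Proof. partial_tac. Qed.

Lemma bracket_val_gradients :
  bracket_val q g x (grad_x_Kfun M q Q g n x p) (grad_p_Kfun q g n x p)
    (grad_x_Ham q Q x) (grad_p_Ham M p) = 0.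
Proof.
  pose proof (norm3_pos x Hx) as Hr.
  assert (Hrr : norm3 x ^ 2 = dot x x) by apply pow2_sqrt, Rlt_le, dot_self_pos, Hx.
  pose proof (Rpower_half_sqr _ Hr) as Hss.
  assert (Hs : 0 < Rpower (norm3 x) (1/2)) by apply exp_pos.
  unfold bracket_val, Fmat, Bfield.
  rewrite Rpower_five_halves by exact Hr.
  unfold grad_x_Kfun, grad_p_Kfun, grad_x_Ham, grad_p_Ham.
  set (s := Rpower (norm3 x) (1/2)) in *. set (r := norm3 x) in *.
  clearbody s r. subst r.
  unfold cross, dot, sum3, eps in *.
  field_simplify; [| lra ..].
  unfold Rdiv. apply Rmult_eq_0_compat_r.
  assert (Hx2 : x 2%nat ^ 2 = (s * s) ^ 2 - x 0%nat ^ 2 - x 1%nat ^ 2)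
    by (rewrite Hrr; ring).
  rewrite Hx2. ring.
Qed.

End Gradients.

Lemma bracket_val_ext q g x (dPx dPp dRx dRp dPx' dPp' dRx' dRp' : nat -> R) :
  (forall i, (i < 3)%nat ->
     dPx i = dPx' i /\ dPp i = dPp' i /\ dRx i = dRx' i /\ dRp i = dRp' i) ->
  bracket_val q g x dPx dPp dRx dRp = bracket_val q g x dPx' dPp' dRx' dRp'.
Proof.
  intros E. unfold bracket_val, sum3.
  destruct (E 0%nat ltac:(lia)) as (-> & -> & -> & ->).
  destruct (E 1%nat ltac:(lia)) as (-> & -> & -> & ->).
  destruct (E 2%nat ltac:(lia)) as (-> & -> & -> & ->).
  reflexivity.
Qed.

Theorem mainTheorem2 :
  forall (M q Q g : R) (n x p : vec3),
    0 < M ->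
    (x 0%nat, x 1%nat, x 2%nat) <> (0, 0, 0) ->
    (forall i : nat, (i < 3)%nat ->
       (exists d, partial_x (Kfun M q Q g n) x p i d) /\
       (exists d, partial_p (Kfun M q Q g n) x p i d) /\
       (exists d, partial_x (Ham M q Q) x p i d) /\
       (exists d, partial_p (Ham M q Q) x p i d)) /\
    (forall dKx dKp dHx dHp : nat -> R,
       (forall i : nat, (i < 3)%nat ->
          partial_x (Kfun M q Q g n) x p i (dKx i) /\
          partial_p (Kfun M q Q g n) x p i (dKp i) /\
          partial_x (Ham M q Q) x p i (dHx i) /\
          partial_p (Ham M q Q) x p i (dHp i)) ->
       bracket_val q g x dKx dKp dHx dHp = 0).
Proof.
  intros M q Q g n x p HM Hx. split.
  - intros i Hi. repeat split; eexists.
    + now apply partial_x_Kfun.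
    + now apply partial_p_Kfun.
    + now apply partial_x_Ham.
    + now apply partial_p_Ham.
  - intros dKx dKp dHx dHp Hd.
    rewrite (bracket_val_ext q g x _ _ _ _ (grad_x_Kfun M q Q g n x p)
               (grad_p_Kfun q g n x p) (grad_x_Ham q Q x) (grad_p_Ham M p)).
    + now apply bracket_val_gradients.
    + intros i Hi. destruct (Hd i Hi) as (HKx & HKp & HHx & HHp).
      repeat split; eapply uniqueness_limite; eauto.
      * now apply partial_x_Kfun.
      * now apply partial_p_Kfun.
      * now apply partial_x_Ham.
      * now apply partial_p_Ham.
Qed.
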